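(* Let $d\ge2$ be an integer and $N_1,\dots,N_d$ positive integers. Suppose $\mathbf{b}=(b_1,\dots,b_d)\in\mathbb{Z}^d$ is a nonzero vector with \[ \lambda=\lambda(\mathbf{b}):=\max_{1\le i\le d}\frac{|b_i|}{\gcd(b_1,\dots,b_d)N_i}\le1. \] Then there exists a map $f_{\mathbf{b}}:\mathbb{Z}^d\to\mathbb{Z}^{d-1}$ of the form $f_{\mathbf{b}}(\mathbf{x})=M\mathbf{x}+\mathbf{v}$ with $M\in\mathbb{Z}^{(d-1)\times d}$, $\mathbf{v}\in\mathbb{Z}^{d-1}$, such that: (1) for any $\mathbf{x}_1,\mathbf{x}_2\in\mathbb{Z}^d$, $f_{\mathbf{b}}(\mathbf{x}_1)=f_{\mathbf{b}}(\mathbf{x}_2)$ if and only if $\mathbf{x}_1-\mathbf{x}_2=k\mathbf{b}$ for some $k\in\mathbb{Q}$; (2) there exist positive integers $N_1^*,\dots,N_{d-1}^*\ge\min_{1\le i\le d}N_i$ with $\frac12\le\frac{N_1^*\cdots N_{d-1}^*}{\lambda N_1\cdots N_d}\le2^{d^2}$ and $f_{\mathbf{b}}([N_1]\times\cdots\times[N_d])\subseteq[N_1^*]\times\cdots\times[N_{d-1}^*]$.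
   Context: $[N]=\{1,\dots,N\}$. *)

From HB Require Import structures.
From mathcomp Require Import all_boot all_order all_algebra.
Set Implicit Arguments. Unset Strict Implicit. Unset Printing Implicit Defensive.
Import Order.TTheory GRing.Theory Num.Theory.
Local Open Scope ring_scope.

Definition gcd_vec (d : nat) (b : 'I_d -> int) : int :=
  \big[gcdz/0%Z]_(i < d) b i.

Definition lam (d : nat) (N : 'I_d -> nat) (b : 'I_d -> int) : rat :=
  \big[Num.max/0]_(i < d) ((`|b i|%:~R : rat) / ((gcd_vec b * (N i)%:Z)%:~R)).

Definition minN (d : nat) (N : 'I_d -> nat) : nat :=
  (\big[minn/(\max_(i < d) N i)%N]_(i < d) N i)%N.

(* Let g = gcd(b) and choose r maximising |b_i| / N_i.  Measure integer vectors
   by the weighted norm |m|_N = sum_i |m_i| N_i.  The integer vectors orthogonal to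
   b form a lattice of rank d-1 whose projection forgetting coordinate r has
   determinant |b_r| / g, and by the choice of r the r-th coordinate of such a
   vector weighs at most as much as all the others together.  So it suffices to
   find d-1 independent vectors in the projected lattice whose norms have product
   at most 2^((d-1)^2) |b_r| / g prod_(i <> r) N_i = 2^((d-1)^2) lambda prod_i N_i.
   This weak form of Minkowski's second theorem is proved by induction on the
   dimension: take a shortest lattice vector y, eliminate its dominant coordinate p
   from the other vectors by Chio's condensation, apply the induction hypothesis,
   and lift the vectors obtained back, reducing their p-th coordinate modulo y_p.
   These vectors are the rows of M; M x = M x' exactly when x - x' is parallel to b,
   each row maps the box onto an interval of length at most its norm, and the lower
   bound is reached by enlarging N*_1 if necessary. *)

From HB Require Import structures.
From mathcomp Require Import all_boot all_order all_algebra.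
From mathcomp Require Import zify ring lra.
From Stdlib Require Import Classical Wf_nat.
Import Order.TTheory GRing.Theory Num.Theory.
Local Open Scope ring_scope.
Set Implicit Arguments. Unset Strict Implicit. Unset Printing Implicit Defensive.

Lemma sum_mul_delta (R : pzSemiRingType) n (F : 'I_n -> R) k : \sum_i F i * (i == k)%:R = F k.
Proof.
rewrite (bigD1 k) //= eqxx mulr1 big1 ?addr0 // => i /negbTE->.
by rewrite mulr0.
Qed.

Lemma row_neq0_det (R : comNzRingType) n (A : 'M[R]_n) j : \det A != 0 -> row j A != 0.
Proof.
apply: contraNneq => Aj0; rewrite (expand_det_row _ j) big1 // => k _.
by have := congr1 (fun v : 'rV_n => v 0 k) Aj0; rewrite !mxE => ->; rewrite mul0r.
Qed.

Lemma exists_entry_neq0 (R : nmodType) n (x : 'rV[R]_n) : x != 0 -> exists i, x ord0 i != 0.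
Proof.
move=> x_neq0; apply/existsP; apply: contraNT x_neq0; rewrite negb_exists => /forallP x0.
by apply/eqP/rowP => i; rewrite [RHS]mxE; apply/eqP; rewrite -[_ == 0]negbK x0.
Qed.

Lemma row_col' (R : Type) m n (A : 'M[R]_(m, n)) r j : row j (col' r A) = col' r (row j A).
Proof. by apply/rowP => k; rewrite !mxE. Qed.

Lemma row_neq0_det_col' (R : comNzRingType) n (A : 'M[R]_(n, n.+1)) r j :
  \det (col' r A) != 0 -> row j A != 0.
Proof.
move=> detA; apply: contraNneq (row_neq0_det j detA) => Aj0; apply/eqP/rowP => k.
by have := congr1 (fun v : 'rV_n.+1 => v ord0 (lift r k)) Aj0; rewrite !mxE.
Qed.

Lemma absz_det_unitmx n (R : 'M[int]_n) : R \in unitmx -> `|\det R|%N = 1%N.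
Proof. by rewrite unitmxE; move: (\det R) => z ?; lia. Qed.

Lemma absz_sum_le n (F : 'I_n -> int) : (`|(\sum_i F i)%R| <= \sum_i `|F i|)%N.
Proof. by elim/big_rec2: _ => // i y x _; lia. Qed.

(** * Chio condensation *)

Definition elim_coord n (p : 'I_n.+1) (y x : 'rV[int]_n.+1) : 'rV[int]_n :=
  y ord0 p *: col' p x - x ord0 p *: col' p y.

Definition elim_rows n (p : 'I_n.+1) (X : 'M[int]_n.+1) : 'M[int]_n :=
  \matrix_j elim_coord p (row ord0 X) (row j (row' ord0 X)).

Lemma row_elim_rows n (p : 'I_n.+1) (X : 'M[int]_n.+1) j :
  row j (elim_rows p X) = elim_coord p (row ord0 X) (row (lift ord0 j) X).
Proof. by rewrite rowK row'Esub row_rowsub. Qed.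

Lemma absz_det_elim_rows n (p : 'I_n.+1) (X : 'M[int]_n.+1) :
  (`|\det X| * `|X ord0 p| ^ n = `|X ord0 p| * `|\det (elim_rows p X)|)%N.
Proof.
set T : 'M[int]_n.+1 := \matrix_(i, k) (if k == p then (i == p)%:R
   else X ord0 p * (i == k)%:R - (i == p)%:R * X ord0 k).
have sum_T (F : 'I_n.+1 -> int) k : k != p ->
    \sum_i F i * T i k = F k * X ord0 p - F p * X ord0 k.
  move=> /negbTE kp; rewrite (eq_bigr (fun i =>
    F i * (i == k)%:R * X ord0 p - F i * (i == p)%:R * X ord0 k)) => [|i _].
    by rewrite sumrB -!mulr_suml !sum_mul_delta.
  by rewrite mxE kp; ring.
have lift_neq (j : 'I_n) : lift p j != p by rewrite eq_sym neq_lift.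
have detT : \det T = X ord0 p ^+ n.
  rewrite (expand_det_col T p) (bigD1 p) //= big1 => [|i /negbTE ip]; last first.
    by rewrite mxE eqxx ip mul0r.
  rewrite mxE !eqxx mul1r addr0 /cofactor.
  have -> : row' p (col' p T) = (X ord0 p)%:M.
    apply/matrixP => i j; rewrite !mxE !(negbTE (lift_neq _)) (inj_eq lift_inj).
    by rewrite mul0r subr0 mulr_natr.
  by rewrite det_scalar -signr_odd addnn odd_double mul1r.
have detXT : \det (X *m T) = X ord0 p * ((-1) ^+ p * \det (elim_rows p X)).
  rewrite (expand_det_row _ ord0) (bigD1 p) //= big1 => [|k kp]; last first.
    by rewrite !mxE sum_T // [X ord0 k * _]mulrC subrr mul0r.
  rewrite addr0 /cofactor add0n.
  have -> : row' ord0 (col' p (X *m T)) = elim_rows p X.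
    by apply/matrixP => j k; rewrite !mxE sum_T ?lift_neq // mulrC.
  rewrite mxE.
  by under eq_bigr => i _ do rewrite mxE eqxx; rewrite sum_mul_delta.
have := congr1 absz detXT; rewrite det_mulmx detT.
by rewrite !abszM abszX absz_sign mul1n.
Qed.

Lemma elim_coord_mul n (p : 'I_n.+1) (y : 'rV[int]_n.+1) m (w : 'rV[int]_m)
    (A : 'M[int]_(m, n.+1)) :
  elim_coord p y (w *m A) = w *m \matrix_j elim_coord p y (row j A).
Proof.
apply/rowP => k; rewrite !mxE !mulr_sumr mulr_suml -sumrB.
by apply: eq_bigr => j _; rewrite !mxE; ring.
Qed.

Lemma elim_coordBZ n (p : 'I_n.+1) (y x : 'rV[int]_n.+1) c :
  elim_coord p y (x - c *: y) = elim_coord p y x.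
Proof. by apply/rowP => k; rewrite !mxE; ring. Qed.

(** * Weighted norms *)

Definition wnorm n (N : 'I_n -> nat) (x : 'rV[int]_n) : nat :=
  (\sum_i `|x ord0 i| * N i)%N.

Lemma wnorm_col' n (N : 'I_n.+1 -> nat) p (x : 'rV[int]_n.+1) :
  wnorm N x = (`|x ord0 p| * N p + wnorm (fun k => N (lift p k)) (col' p x))%N.
Proof. by rewrite /wnorm (bigD1_ord p) //=; under [in RHS]eq_bigr do rewrite mxE. Qed.

Lemma wnormZ n (N : 'I_n -> nat) c (x : 'rV[int]_n) :
  wnorm N (c *: x) = (`|c| * wnorm N x)%N.
Proof. by rewrite /wnorm big_distrr; apply: eq_bigr => i _; rewrite mxE abszM -mulnA. Qed.

Lemma weight_le_wnorm n (N : 'I_n -> nat) (x : 'rV[int]_n) i :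
  x ord0 i != 0 -> (N i <= wnorm N x)%N.
Proof.
move=> xi; rewrite /wnorm (bigD1 i) //= (leq_trans _ (leq_addr _ _)) //.
by rewrite leq_pmull // absz_gt0.
Qed.

Lemma wnorm_gt0 n (N : 'I_n -> nat) (x : 'rV[int]_n) :
  (forall i, 0 < N i)%N -> x != 0 -> (0 < wnorm N x)%N.
Proof.
by move=> N_gt0 /exists_entry_neq0 [i xi]; apply: leq_trans (N_gt0 i) (weight_le_wnorm _ xi).
Qed.

Lemma wnorm_elim_coord n (N : 'I_n.+1 -> nat) p (y x : 'rV[int]_n.+1) :
  (wnorm N y <= wnorm N x)%N -> (2 * `|x ord0 p| <= `|y ord0 p|)%N ->
  (`|y ord0 p| * wnorm N x <= 2 * wnorm (fun k => N (lift p k)) (elim_coord p y x))%N.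
Proof.
set N' := fun k => N (lift p k).
have triangle : (`|y ord0 p| * wnorm N' (col' p x) <=
    wnorm N' (elim_coord p y x) + `|x ord0 p| * wnorm N' (col' p y))%N.
  rewrite /wnorm !big_distrr -big_split /=; apply: leq_sum => k _; rewrite !mxE.
  rewrite !mulnA -mulnDl leq_mul2r -!abszM; apply/orP; right.
  by have := leqD_dist (y ord0 p * x ord0 (lift p k)) (x ord0 p * y ord0 (lift p k)) 0;
    rewrite !subr0.
rewrite (wnorm_col' N p x) (wnorm_col' N p y) -/N'.
move: triangle; move: (wnorm N' (elim_coord p y x)) (wnorm N' (col' p x)).
move: (wnorm N' (col' p y)) `|x ord0 p|%N `|y ord0 p|%N; nia.
Qed.

(** * Short independent lattice vectors *)

Lemma exists_half_remainder (a b : int) :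
  b != 0 -> exists k, (2 * `|(a - k * b)%R| <= `|b|)%N.
Proof.
move=> b0; have := divz_eq a b; have := modz_ge0 a b0; have := ltz_mod a b0.
set q := (a %/ b)%Z; set r := (a %% b)%Z => r_lt r_ge0 a_eq.
have [small|big] := leqP (2 * `|r|) `|b|.
  by exists q; rewrite {1}a_eq addrC addKr.
by exists (q + sgz b); rewrite {1}a_eq mulrDl -abszEsg; lia.
Qed.

Lemma int_row_unimodular_multiple n (w : 'rV[int]_n.+1) :
  exists c (R : 'M[int]_n.+1), R \in unitmx /\ w = c *: row ord0 R.
Proof.
have [L _ [R uR [d _ ->]]] := int_Smith_normal_form w.
exists (L 0 0 * d`_0), R; split=> //; apply/rowP => j; rewrite !mxE.
rewrite (bigD1 ord0) //= big1 => [|k]; last first.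
  rewrite -val_eqE /= eq_sym => /negbTE k0.
  by rewrite !mxE big_ord1 !mxE k0 mulr0 mul0r.
by rewrite addr0 !mxE big_ord1 !mxE mulr1n.
Qed.

Lemma exists_shortest_lattice_row n (N : 'I_n.+1 -> nat) (B : 'M[int]_n.+1) :
  \det B != 0 -> exists2 R : 'M[int]_n.+1, R \in unitmx &
    row ord0 (R *m B) != 0 /\
    forall w, w *m B != 0 -> (wnorm N (row ord0 (R *m B)) <= wnorm N (w *m B))%N.
Proof.
move=> detB; pose P m := exists2 w : 'rV_n.+1, w *m B != 0 & wnorm N (w *m B) = m.
have inhP : exists m, P m.
  by exists (wnorm N (row ord0 B)), (delta_mx 0 ord0); rewrite -rowE ?row_neq0_det.
have [m [[[w0 w0B <-] w0_min] _]] :=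
  dec_inh_nat_subset_has_unique_least_element P (fun m => classic (P m)) inhP.
(* [w0 B] is a multiple of [row 0 (R B)] with [R] unimodular, which is thus also
   a shortest vector. *)
have [c [R [uR w0E]]] := int_row_unimodular_multiple w0.
have w0BE : w0 *m B = c *: row ord0 (R *m B) by rewrite w0E row_mul scalemxAl.
have [c0 RB0] : c != 0 /\ row ord0 (R *m B) != 0.
  by apply/andP; move: w0B; rewrite w0BE scalemx_eq0 negb_or.
exists R => //; split=> // w wB; apply: leq_trans (_ : wnorm N (w0 *m B) <= _)%N.
  by rewrite w0BE wnormZ leq_pmull // absz_gt0.
by apply/ssrnat.leP/w0_min; exists w.
Qed.

Lemma lift_elim_coord n (p : 'I_n.+1) (X : 'M[int]_n.+1) (u : 'rV[int]_n) :
  X ord0 p != 0 -> exists w : 'rV[int]_n.+1,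
    elim_coord p (row ord0 X) (w *m X) = u *m elim_rows p X /\
    (2 * `|(w *m X) ord0 p| <= `|X ord0 p|)%N.
Proof.
move=> Xp; have [k half] := exists_half_remainder ((u *m row' ord0 X) ord0 p) Xp.
exists (u *m row' ord0 1%:M - k *: row ord0 1%:M).
have -> : (u *m row' ord0 1%:M - k *: row ord0 1%:M) *m X =
    u *m row' ord0 X - k *: row ord0 X.
  by rewrite mulmxBl -mulmxA -scalemxAl row'Esub mul_rowsub_mx -row_mul !mul1mx.
rewrite elim_coordBZ elim_coord_mul; split=> //.
by move: half; rewrite !mxE.
Qed.

Lemma lift_elim_rows n (p : 'I_n.+1) (X : 'M[int]_n.+1) (W2 : 'M[int]_n) :
  X ord0 p != 0 -> exists W : 'M[int]_n.+1,
    [/\ row ord0 (W *m X) = row ord0 X,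
        elim_rows p (W *m X) = W2 *m elim_rows p X &
        forall j, (2 * `|(W *m X) (lift ord0 j) p| <= `|X ord0 p|)%N].
Proof.
move=> Xp; have [w wP] := fin_all_exists (fun j => lift_elim_coord (row j W2) Xp).
set W := \matrix_i (if unlift ord0 i is Some j then w j else row ord0 1%:M).
have row0 : row ord0 (W *m X) = row ord0 X.
  by rewrite row_mul rowK unlift_none -row_mul mul1mx.
have rowl j : row (lift ord0 j) (W *m X) = w j *m X by rewrite row_mul rowK liftK.
exists W; split=> // [|j].
  apply/row_matrixP => j; rewrite row_elim_rows row0 rowl row_mul.
  by case: (wP j).
by case: (wP j) => _; rewrite -rowl mxE.
Qed.

Lemma exists_dominant_coord n (N : 'I_n.+1 -> nat) (y : 'rV[int]_n.+1) :
  (forall i, 0 < N i)%N -> y != 0 ->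
  exists2 p, y ord0 p != 0 & (wnorm N y <= n.+1 * (`|y ord0 p| * N p))%N.
Proof.
move=> N_gt0 y_neq0.
have [p _ p_max] := arg_maxnP (fun i => `|y ord0 i| * N i)%N (isT : predT ord0).
exists p.
  apply: contraNneq y_neq0 => yp0; apply/eqP/rowP => i; rewrite [RHS]mxE.
  have := p_max i isT; rewrite yp0 absz0 mul0n /= leqn0 muln_eq0 absz_eq0.
  by rewrite (negbTE (lt0n_neq0 (N_gt0 i))) orbF => /eqP.
rewrite /wnorm -[X in (_ <= X * _)%N](card_ord n.+1) -sum_nat_const.
by apply: leq_sum => i _; apply: p_max.
Qed.

(* [a = |y_p|], [s = |y|_N]; [x j] and [z j] are the norms of the lifted vectors
   and of their eliminated images. *)
Lemma short_vectors_bound_step n (a s Np D D' NN : nat) (x z : 'I_n -> nat) :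
  (0 < a)%N -> (s <= n.+1 * (a * Np))%N -> (forall j, a * x j <= 2 * z j)%N ->
  (\prod_j z j <= 2 ^ (n * n) * D' * NN)%N -> (D * a ^ n = a * D')%N ->
  (s * \prod_j x j <= 2 ^ (n.+1 * n.+1) * D * (Np * NN))%N.
Proof.
move=> a_gt0 s_le xz z_le detE; rewrite -(@leq_pmul2l (a ^ n)) ?expn_gt0 ?a_gt0 //.
have prod_const c : (\prod_(j < n) c = c ^ n)%N by rewrite prod_nat_const card_ord.
have x_le : (a ^ n * \prod_j x j <= 2 ^ n * \prod_j z j)%N.
  by rewrite -!prod_const -!big_split; apply: leq_prod => j _.
have pow_le : (n.+1 * 2 ^ n * 2 ^ (n * n) <= 2 ^ (n.+1 * n.+1))%N.
  rewrite (_ : n.+1 * n.+1 = n.+1 + n + n * n)%N; last by ring.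
  by rewrite !expnD !leq_mul // ltnW // ltn_expl.
apply: leq_trans (_ : n.+1 * (a * Np) * (2 ^ n * (2 ^ (n * n) * D' * NN)) <= _)%N.
  by rewrite mulnCA leq_mul // (leq_trans x_le) // leq_mul2l z_le orbT.
rewrite [X in (X <= _)%N](_ : _ = n.+1 * 2 ^ n * 2 ^ (n * n) * (Np * NN * (a * D')))%N;
  last by ring.
rewrite -detE [X in (_ <= X)%N](_ : _ = 2 ^ (n.+1 * n.+1) * (Np * NN * (D * a ^ n)))%N;
  last by ring.
by rewrite leq_mul2r pow_le orbT.
Qed.

Theorem exists_short_independent_lattice_vectors n (N : 'I_n -> nat) (B : 'M[int]_n) :
  (forall i, 0 < N i)%N -> \det B != 0 ->
  exists2 W : 'M[int]_n, \det W != 0 &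
    (\prod_j wnorm N (row j (W *m B)) <= 2 ^ (n * n) * `|\det B| * \prod_i N i)%N.
Proof.
elim: n N B => [|n IH] N B N_gt0 detB.
  by exists 1; rewrite ?det1 ?oner_eq0 // !big_ord0 muln1 mul1n absz_gt0.
have [R uR [y_neq0 y_min]] := exists_shortest_lattice_row N detB.
set X := R *m B; set y := row ord0 X.
have [p yp_neq0 y_bound] := exists_dominant_coord N_gt0 y_neq0.
have yXp : y ord0 p = X ord0 p by rewrite mxE.
rewrite yXp in yp_neq0 y_bound; set a := `|X ord0 p|%N in y_bound.
have detX : `|\det X|%N = `|\det B|%N.
  by rewrite det_mulmx abszM (absz_det_unitmx uR) mul1n.
have detXE := absz_det_elim_rows p X; rewrite detX -/a in detXE.
have detE : \det (elim_rows p X) != 0.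
  apply: contraNneq detB => E0; move/eqP: detXE; rewrite E0 absz0 muln0.
  by rewrite muln_eq0 expn_eq0 absz_eq0 /a absz_eq0 (negbTE yp_neq0) andFb orbF => ->.
have [W2 detW2 W2_bound] := IH _ _ (fun k => N_gt0 (lift p k)) detE.
have [W' [Y0 elimY Yhalf]] := lift_elim_rows W2 yp_neq0.
set Y := W' *m X in Y0 elimY Yhalf *; rewrite -/y in Y0.
have detY : \det Y != 0.
  apply/negP => /eqP Y0'; have := absz_det_elim_rows p Y.
  have Yp : Y ord0 p = X ord0 p by rewrite -yXp -Y0 [RHS]mxE.
  rewrite -/Y elimY Yp Y0' det_mulmx absz0 mul0n.
  move=> /esym/eqP; rewrite abszM !muln_eq0 !absz_eq0.
  by rewrite (negbTE yp_neq0) (negbTE detW2) (negbTE detE).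
set N' := fun k => N (lift p k).
have row_bound (j : 'I_n) :
    (a * wnorm N (row (lift ord0 j) Y) <= 2 * wnorm N' (row j (W2 *m elim_rows p X)))%N.
  rewrite -elimY row_elim_rows Y0 /a -yXp.
  apply: wnorm_elim_coord; last by rewrite yXp [_ ord0 _]mxE.
  rewrite /Y /X row_mul mulmxA; apply: y_min.
  by rewrite -mulmxA -row_mul row_neq0_det.
exists (W' *m R).
  by apply: contraNneq detY => WR0; rewrite /Y /X mulmxA det_mulmx WR0 mul0r.
rewrite -mulmxA -/X -/Y big_ord_recl Y0 (bigD1_ord p) //=.
by apply: (short_vectors_bound_step _ y_bound row_bound W2_bound detXE); rewrite absz_gt0.
Qed.

(** * The lattice orthogonal to b *)

Lemma gcd_vecE d (b : 'I_d -> int) :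
  gcd_vec b = (\big[gcdn/0%N]_(i < d) `|b i|%N)%:Z.
Proof. by rewrite /gcd_vec; apply: (big_rec2 (fun x y => x = y%:Z)) => // i x y _ ->. Qed.

Lemma gcd_vec_neq0 d (b : 'I_d -> int) i : b i != 0 -> gcd_vec b != 0.
Proof.
move=> bi; rewrite gcd_vecE; apply: contraNneq bi => /eqP; rewrite eqz_nat => /eqP G0.
rewrite -absz_eq0 -dvd0n -G0.
exact: (elimT (dvdn_biggcdP _ _ _) (dvdnn _)) i isT.
Qed.

Lemma gcd_vec_unimodular_row n (b : 'I_n.+1 -> int) k (R : 'M[int]_n.+1) :
  R \in unitmx -> (forall i, b i = k * R ord0 i) -> gcd_vec b = `|k|%:Z.
Proof.
move=> uR bE.
rewrite gcd_vecE; congr Posz; apply/eqP; rewrite eqn_dvd; apply/andP; split; last first.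
  by apply/dvdn_biggcdP => i _; rewrite bE abszM dvdn_mulr.
have kE : k = \sum_i b i * invmx R i ord0.
  have := congr1 (fun A : 'M_n.+1 => A ord0 ord0) (mulmxV uR); rewrite !mxE /= => e.
  by under eq_bigr => i _ do rewrite bE -mulrA; rewrite -mulr_sumr e mulr1.
suff : ((\big[gcdn/0%N]_(i < n.+1) `|b i|%N)%:Z %| k)%Z by rewrite dvdzE.
rewrite kE; apply: rpred_sum => i _; apply: dvdz_mulr.
by apply: (elimT (dvdn_biggcdP _ _ _) (dvdnn _)).
Qed.

Lemma absz_det_invmx_minor n (R : 'M[int]_n.+1) r : R \in unitmx ->
  `|\det (row' r (col' ord0 (invmx R)))|%N = `|R ord0 r|%N.
Proof.
move=> uR; set Q := invmx R.
have adjQ : \adj Q = \det Q *: R.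
  have := congr1 (mulmx R) (mul_mx_adj Q).
  by rewrite mulmxA mulmxV // mul1mx mul_mx_scalar.
have := congr1 (fun A : 'M_n.+1 => `|A ord0 r|%N) adjQ; rewrite /= !mxE /cofactor.
rewrite abszMsign abszM => ->.
by rewrite absz_det_unitmx ?mul1n ?unitmx_inv.
Qed.

Lemma exists_orthogonal_matrix_det n (b : 'I_n.+1 -> int) r :
  exists C : 'M[int]_(n, n.+1), (forall l, \sum_i C l i * b i = 0) /\
    (`|\det (col' r C)| * `|gcd_vec b| = `|b r|)%N.
Proof.
have [k [R [uR bE]]] := int_row_unimodular_multiple (\row_i b i).
have bkR i : b i = k * R ord0 i by have := congr1 (fun v : 'rV_n.+1 => v ord0 i) bE; rewrite !mxE.
exists (col' ord0 (invmx R))^T; split=> [l|].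
  have := congr1 (fun A : 'M_n.+1 => A ord0 (lift ord0 l)) (mulmxV uR).
  rewrite !mxE (negbTE (neq_lift _ _)) => /= RQ0.
  transitivity (k * \sum_i R ord0 i * invmx R i (lift ord0 l)); last by rewrite RQ0 mulr0.
  rewrite mulr_sumr; apply: eq_bigr => i _.
  by rewrite !mxE bkR; ring.
rewrite -tr_row' det_tr absz_det_invmx_minor // (gcd_vec_unimodular_row uR bkR).
by rewrite bkR abszM mulnC.
Qed.

Lemma wnorm_orthogonal_le n (N : 'I_n.+1 -> nat) (b : 'I_n.+1 -> int) r (m : 'rV[int]_n.+1) :
  b r != 0 -> (forall i, `|b i| * N r <= `|b r| * N i)%N -> \sum_i m ord0 i * b i = 0 ->
  (wnorm N m <= 2 * wnorm (fun k => N (lift r k)) (col' r m))%N.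
Proof.
move=> br r_max mb0; rewrite (wnorm_col' N r) mul2n -addnn leq_add2r.
have mr_le : (`|b r| * `|m ord0 r| <= \sum_k `|b (lift r k)| * `|m ord0 (lift r k)|)%N.
  move: mb0; rewrite (bigD1_ord r) //= => /eqP; rewrite addr_eq0 => /eqP mr_eq.
  rewrite -abszM mulrC mr_eq abszN (leq_trans (absz_sum_le _)) // leq_sum // => k _.
  by rewrite abszM mulnC.
rewrite -(@leq_pmul2l `|b r|) ?absz_gt0 // mulnA (leq_trans (leq_mul mr_le (leqnn (N r)))) //.
rewrite /wnorm big_distrl big_distrr /= leq_sum // => k _; rewrite mxE.
by have := r_max (lift r k); nia.
Qed.

Lemma exists_short_orthogonal_matrix n (N : 'I_n.+1 -> nat) (b : 'I_n.+1 -> int) r :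
  (forall i, 0 < N i)%N -> b r != 0 -> (forall i, `|b i| * N r <= `|b r| * N i)%N ->
  exists M : 'M[int]_(n, n.+1),
    [/\ forall j, \sum_i M j i * b i = 0, \det (col' r M) != 0 &
      (`|gcd_vec b| * \prod_j wnorm N (row j M) <=
        2 ^ (n * n.+1) * (`|b r| * \prod_k N (lift r k)))%N].
Proof.
move=> N_gt0 br r_max; set N' := fun k => N (lift r k).
have [C [Cb detC]] := exists_orthogonal_matrix_det b r.
have detC_neq0 : \det (col' r C) != 0.
  apply: contraNneq br => C0; move: detC; rewrite C0 absz0 mul0n => /esym/eqP.
  by rewrite absz_eq0 => ->.
have [W detW W_bound] :=
  exists_short_independent_lattice_vectors (fun k => N_gt0 (lift r k)) detC_neq0.
set M := W *m C.
have col'M : col' r M = W *m col' r C by rewrite !col'Esub mulmx_colsub.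
have Mb j : \sum_i M j i * b i = 0.
  under eq_bigr do rewrite mxE mulr_suml.
  rewrite exchange_big big1 // => l _.
  transitivity (W j l * \sum_i C l i * b i); last by rewrite Cb mulr0.
  by rewrite mulr_sumr; apply: eq_bigr => i _; rewrite mulrA.
have M_bound : (\prod_j wnorm N (row j M) <=
    2 ^ n * (2 ^ (n * n) * `|\det (col' r C)| * \prod_k N' k))%N.
  apply: leq_trans (_ : _ <= \prod_j (2 * wnorm N' (row j (W *m col' r C))))%N _.
    apply: leq_prod => j _; rewrite -col'M row_col'.
    by apply: wnorm_orthogonal_le br r_max _; under eq_bigr do rewrite mxE; apply: Mb.
  by rewrite big_split /= prod_nat_const card_ord leq_mul2l W_bound orbT.
exists M; split=> //; first by rewrite col'M det_mulmx mulf_neq0.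
rewrite -detC (leq_trans (leq_mul (leqnn _) M_bound)) // eq_leq //.
by rewrite (_ : n * n.+1 = n + n * n)%N ?expnD; ring.
Qed.

(** * The affine map *)

Lemma mulmx_col'_eq0 (F : fieldType) n (M : 'M[F]_(n, n.+1)) (u : 'cV[F]_n.+1) r :
  \det (col' r M) != 0 -> u r 0 = 0 -> M *m u = 0 -> u = 0.
Proof.
move=> detM ur0 Mu0.
have Mu' : col' r M *m row' r u = 0.
  apply/matrixP => j z; have := congr1 (fun A : 'cV_n => A j 0) Mu0.
  rewrite [RHS]mxE [LHS]mxE (bigD1_ord r) //= ur0 mulr0 add0r => e.
  by rewrite ord1 [RHS]mxE -e [LHS]mxE; apply: eq_bigr => k _; rewrite !mxE.
have uM : col' r M \in unitmx by rewrite unitmxE unitfE.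
have u'0 : row' r u = 0 by rewrite -[row' r u](mulKmx uM) Mu' mulmx0.
apply/matrixP => i z; rewrite ord1 mxE; case: (unliftP r i) => [k ->|->] //.
by have := congr1 (fun A : 'cV_n => A k 0) u'0; rewrite !mxE.
Qed.

Lemma mulmx_eq_iff_rat_multiple n (M : 'M[int]_(n, n.+1)) (b : 'I_n.+1 -> int) r :
  b r != 0 -> (forall j, \sum_i M j i * b i = 0) -> \det (col' r M) != 0 ->
  forall x1 x2 : 'cV[int]_n.+1, M *m x1 = M *m x2 <->
    exists k : rat, forall i, ((x1 i 0 - x2 i 0)%:~R : rat) = k * (b i)%:~R.
Proof.
move=> br Mb detM x1 x2.
pose Mq := map_mx (intr : int -> rat) M; pose bq : 'cV[rat]_n.+1 := \col_i (b i)%:~R.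
have Mbq : Mq *m bq = 0.
  apply/matrixP => j z; rewrite !mxE.
  transitivity ((\sum_i M j i * b i)%:~R : rat); last by rewrite Mb.
  by rewrite rmorph_sum; apply: eq_bigr => i _; rewrite !mxE rmorphM.
have Mq_int x : Mq *m map_mx intr x = map_mx intr (M *m x).
  by apply/matrixP => j z; rewrite !mxE rmorph_sum; apply: eq_bigr => i _; rewrite !mxE rmorphM.
pose u : 'cV[rat]_n.+1 := map_mx intr (x1 - x2).
have uE i : u i 0 = (x1 i 0 - x2 i 0)%:~R by rewrite !mxE.
split=> [Mx | [k uk]].
  pose k := u r 0 / (b r)%:~R; exists k => i; rewrite -uE.
  suff : u - k *: bq = 0 by move/matrixP/(_ i 0); rewrite !mxE => /eqP; rewrite subr_eq0 => /eqP.
  apply: (mulmx_col'_eq0 (M := Mq) (r := r)); first by rewrite -map_col' det_map_mx intr_eq0.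
    by rewrite !mxE /k -uE divfK ?subrr // intr_eq0.
  by rewrite mulmxBr -scalemxAr Mbq scaler0 subr0 Mq_int mulmxBr Mx subrr map_mx0.
have ukb : u = k *: bq by apply/matrixP => i z; rewrite ord1 !mxE uk.
have : Mq *m u = 0 by rewrite ukb -scalemxAr Mbq scaler0.
rewrite Mq_int => /matrixP Mx; apply/eqP; rewrite -subr_eq0 -mulmxBr; apply/eqP/matrixP => j z.
by have := Mx j z; rewrite !mxE => /eqP; rewrite intr_eq0 => /eqP.
Qed.

(* The minimum of [x |-> m x] over the box [1, N_1] x ... x [1, N_n]. *)
Definition box_min n (N : 'I_n -> nat) (m : 'rV[int]_n) : int :=
  \sum_i (if 0 <= m ord0 i then m ord0 i else m ord0 i * (N i)%:Z).

Lemma box_min_term (c x : int) (N : nat) : 1 <= x <= N%:Z ->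
  0 <= c * x - (if 0 <= c then c else c * N%:Z) <= `|c| * (N%:Z - 1).
Proof.
case/andP => x_ge1 x_leN; case: ifP => [c_ge0|/negbT]; last rewrite -ltNge => c_lt0.
  by rewrite ger0_norm //; apply/andP; split; nra.
by rewrite ltr0_norm //; apply/andP; split; nra.
Qed.

Lemma box_image n (N : 'I_n -> nat) (m : 'rV[int]_n) (x : 'cV[int]_n) :
  m != 0 -> (forall i, 1 <= x i 0 <= (N i)%:Z) ->
  1 <= \sum_i m ord0 i * x i 0 + (1 - box_min N m) <= (wnorm N m)%:Z.
Proof.
move=> m_neq0 x_box.
pose lo i := if 0 <= m ord0 i then m ord0 i else m ord0 i * (N i)%:Z.
have t_bound i : 0 <= m ord0 i * x i 0 - lo i <= `|m ord0 i| * ((N i)%:Z - 1).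
  exact: box_min_term.
rewrite /box_min -/lo addrCA -sumrB addrC lerDr.
rewrite sumr_ge0 /= => [|i _]; last by case/andP: (t_bound i).
have [i mi] := exists_entry_neq0 m_neq0.
have norm_ge1 : 1 <= \sum_i `|m ord0 i|.
  rewrite (bigD1 i) //= ler_wpDr ?sumr_ge0 //.
  by move: mi; rewrite -normr_gt0; move: `|_| => z; lia.
have wnormE : (wnorm N m)%:Z = \sum_i `|m ord0 i| * (N i)%:Z.
  rewrite /wnorm (big_morph Posz PoszD (erefl _)); apply: eq_bigr => k _.
  by rewrite PoszM abszE.
rewrite addrC; apply: le_trans (lerD (lexx 1) (ler_sum _ (fun k _ => (andP (t_bound k)).2))) _.
rewrite wnormE (eq_bigr (fun k => `|m ord0 k| * (N k)%:Z - `|m ord0 k|)) => [|k _].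
  by rewrite sumrB; lra.
by rewrite mulrBr mulr1.
Qed.

(** * lambda(b) and the bounds N* *)

Lemma minN_le d (N : 'I_d -> nat) i : (minN N <= N i)%N.
Proof. by rewrite /minN; have := bigmin_le (\max_(i < d) N i)%N i N; rewrite minEnat. Qed.

Lemma minN_le_wnorm d (N : 'I_d -> nat) (x : 'rV[int]_d) : x != 0 -> (minN N <= wnorm N x)%N.
Proof.
by move=> /exists_entry_neq0 [i xi]; apply: leq_trans (minN_le N i) (weight_le_wnorm _ xi).
Qed.

Lemma exists_max_ratio n (N : 'I_n.+1 -> nat) (b : 'I_n.+1 -> int) :
  (forall i, 0 < N i)%N -> (exists i, b i != 0) ->
  exists2 r, b r != 0 & forall i, (`|b i| * N r <= `|b r| * N i)%N.
Proof.
move=> N_gt0 [i0 bi0].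
have [r _ r_max] := arg_maxP (fun i => (`|b i|%:R / (N i)%:R : rat)) (isT : predT ord0).
have r_maxN i : (`|b i| * N r <= `|b r| * N i)%N.
  have := r_max i isT; rewrite /= ler_pdivrMr ?ltr0n // mulrAC ler_pdivlMr ?ltr0n //.
  by rewrite -!natrM ler_nat.
exists r => //; apply: contraNneq bi0 => br0.
by have := r_maxN i0; rewrite br0 absz0 mul0n leqn0 muln_eq0 absz_eq0 (gtn_eqF (N_gt0 r)) orbF.
Qed.

Lemma lam_mul_prod n (N : 'I_n.+1 -> nat) (b : 'I_n.+1 -> int) r :
  (forall i, 0 < N i)%N -> gcd_vec b != 0 ->
  (forall i, `|b i| * N r <= `|b r| * N i)%N ->
  lam N b * (\prod_i N i)%N%:R =
    (`|b r| * \prod_k N (lift r k))%N%:R / `|gcd_vec b|%N%:R.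
Proof.
move=> N_gt0 g_neq0 r_max; set g := `|gcd_vec b|%N.
have g_gt0 : (0 < g)%N by rewrite absz_gt0.
have ratioE i : (`|b i|%:~R / (gcd_vec b * (N i)%:Z)%:~R : rat) = `|b i|%:R / (g * N i)%:R.
  by rewrite (_ : gcd_vec b = g%:Z) -?abszE -?PoszM // /g gcd_vecE.
have lamE : lam N b = `|b r|%:R / (g * N r)%:R.
  rewrite /lam; under eq_bigr do rewrite ratioE.
  apply/le_anti/andP; split; last exact: le_bigmax (fun i => `|b i|%:R / (g * N i)%:R : rat) r.
  apply: bigmax_le => [|i _]; first by rewrite divr_ge0 ?ler0n.
  rewrite ler_pdivrMr ?ltr0n ?muln_gt0 ?g_gt0 ?N_gt0 // mulrAC.
  rewrite ler_pdivlMr ?ltr0n ?muln_gt0 ?g_gt0 ?N_gt0 //.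
  by rewrite -!natrM ler_nat mulnCA [(`|b r| * _)%N]mulnCA leq_mul2l r_max orbT.
rewrite lamE (bigD1_ord r) //= !natrM; field.
by rewrite !pnatr_eq0 -!lt0n g_gt0 N_gt0.
Qed.

Lemma exists_scaled_bounds m (P : 'I_m.+1 -> nat) (g T e : nat) :
  (0 < g * \prod_j P j)%N -> (g * \prod_j P j <= 2 ^ e * T)%N ->
  exists Nstar : 'I_m.+1 -> nat, [/\ forall j, (P j <= Nstar j)%N,
    (T <= 2 * (g * \prod_j Nstar j))%N & (g * \prod_j Nstar j <= 2 ^ e * T)%N].
Proof.
set Q := (g * \prod_j P j)%N => Q_gt0 Q_le; set K := maxn 1 (T %/ Q).
exists (fun j => if j == ord0 then P j * K else P j)%N.
have prodE : (g * \prod_j (if j == ord0 then P j * K else P j) = Q * K)%N.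
  by rewrite big_ord_recl eqxx (eq_bigr (fun j => P (lift ord0 j))) // /Q big_ord_recl; ring.
have T_lt : (T < Q * (T %/ Q).+1)%N by rewrite mulnC ltn_ceil.
rewrite prodE; split=> [j||].
- by case: eqP => // _; rewrite leq_pmulr // leq_maxl.
- apply: leq_trans (ltnW T_lt) _; rewrite mulnCA leq_mul2l -addn1 mul2n -addnn.
  by rewrite leq_add ?leq_maxr ?leq_maxl ?orbT.
- have [T_small|T_big] := leqP (T %/ Q) 1.
    by rewrite /K (maxn_idPl T_small) muln1.
  rewrite /K (maxn_idPr (ltnW T_big)) mulnC (leq_trans (leq_trunc_div _ _)) //.
  by rewrite leq_pmull ?expn_gt0.
Qed.

Lemma nat_ratio_bounds (Q T g e : nat) : (0 < T)%N -> (0 < g)%N ->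
  (T <= 2 * (g * Q))%N -> (g * Q <= 2 ^ e * T)%N ->
  (1 / 2 : rat) <= Q%:R / (T%:R / g%:R) /\ (Q%:R / (T%:R / g%:R) : rat) <= 2 ^+ e.
Proof.
move=> T_gt0 g_gt0 T_le Q_le; rewrite invf_div mulrA.
rewrite ler_pdivlMr ?ler_pdivrMr ?ltr0n // -natrX -!natrM !ler_nat mulnC.
split=> //; have : (T%:R <= 2 * (g * Q)%:R :> rat) by rewrite -natrM ler_nat.
by lra.
Qed.

Unset Implicit Arguments.

Theorem corollary4p6 (d : nat) (N : 'I_d -> nat) (b : 'I_d -> int) :
  (2 <= d)%N ->
  (forall i, (0 < N i)%N) ->
  (exists i, b i != 0) ->
  lam N b <= 1 ->
  exists (M : 'M[int]_(d.-1, d)) (v : 'cV[int]_(d.-1)),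
    (forall x1 x2 : 'cV[int]_d,
        M *m x1 + v = M *m x2 + v <->
        exists k : rat, forall i, ((x1 i 0 - x2 i 0)%:~R : rat) = k * (b i)%:~R)
    /\
    (exists Nstar : 'I_(d.-1) -> nat,
        (forall j, (0 < Nstar j)%N /\ (minN N <= Nstar j)%N) /\
        (1 / 2 : rat) <= ((\prod_(j < d.-1) Nstar j)%N%:R) / (lam N b * ((\prod_(i < d) N i)%N)%:R) /\
        ((\prod_(j < d.-1) Nstar j)%N%:R) / (lam N b * ((\prod_(i < d) N i)%N)%:R) <= 2 ^+ (d ^ 2) /\
        (forall x : 'cV[int]_d,
           (forall i, 1 <= x i 0 <= (N i)%:Z) ->
           forall j, 1 <= (M *m x + v) j 0 <= (Nstar j)%:Z)).
Proof.
case: d N b => [|[|n]] // N b _ N_gt0 b_neq0 _.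
have [r br r_max] := exists_max_ratio N_gt0 b_neq0.
have [M [Mb detM M_bound]] := exists_short_orthogonal_matrix N_gt0 br r_max.
have M_row j : row j M != 0 := row_neq0_det_col' j detM.
have g_gt0 : (0 < `|gcd_vec b|)%N by rewrite absz_gt0 (gcd_vec_neq0 br).
have T_gt0 : (0 < `|b r| * \prod_k N (lift r k))%N by rewrite muln_gt0 absz_gt0 br prodn_gt0.
have P_gt0 : (0 < `|gcd_vec b| * \prod_j wnorm N (row j M))%N.
  by rewrite muln_gt0 g_gt0 prodn_gt0 // => j; apply: wnorm_gt0.
have pow_le : (2 ^ (n.+1 * n.+2) <= 2 ^ (n.+2 ^ 2))%N by rewrite leq_pexp2l //; nia.
have [Nstar [M_le T_le Nstar_le]] :=
  exists_scaled_bounds P_gt0 (leq_trans M_bound (leq_mul pow_le (leqnn _))).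
exists M, (\col_j (1 - box_min N (row j M))); split.
  move=> x1 x2; rewrite -(mulmx_eq_iff_rat_multiple br Mb detM).
  by split=> [/addIr|->].
exists Nstar; split.
  by move=> j; rewrite !(leq_trans _ (M_le j)) ?wnorm_gt0 ?minN_le_wnorm.
rewrite (lam_mul_prod N_gt0 (gcd_vec_neq0 br) r_max).
have [lo hi] := nat_ratio_bounds T_gt0 g_gt0 T_le Nstar_le.
do 2!split=> //; move=> x x_box j; rewrite !mxE.
have := box_image (N := N) (M_row j) x_box; under eq_bigr do rewrite mxE.
by case/andP=> -> /le_trans; apply; rewrite lez_nat.
Qed.
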